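(* Let $n,p\in\mathbb{N}$ with $p\ge1$ and $n\ge p+1$, and let $\bm\alpha=(\alpha_0,\dots,\alpha_p)\in\mathbb{R}^{p+1}$. For $j=1,\dots,n$ let $\bm u_j$ have components $u_{i,j}=\sqrt{\tfrac{4}{2n+1}}\sin\!\big(\tfrac{i(2j-1)\pi}{2n+1}\big)$, $i=1,\dots,n$. Then $\big(T_n^{\bm\alpha}+H_n^{\bm\alpha,2,1}\big)\bm u_j=\lambda_j\bm u_j$ with $\lambda_j=g_p^{\bm\alpha}\big(\tfrac{(2j-1)\pi}{2n+1}\big)$, and these are all the eigenvalues of $T_n^{\bm\alpha}+H_n^{\bm\alpha,2,1}$.
   Context: Convention $\alpha_k=0$ for $k>p$. $T_n^{\bm\alpha}$ is the $n\times n$ symmetric banded Toeplitz matrix with $(T_n^{\bm\alpha})_{i,j}=\alpha_{|i-j|}$. $H_n^{\bm\alpha,2,1}$ is the $n\times n$ matrix with $(H_n^{\bm\alpha,2,1})_{i,j}=-\alpha_{i+j}+\alpha_{2n+1-i-j}$ (so its top-left corner is $-\alpha_2,-\alpha_3,\dots$ on successive antidiagonals and its bottom-right corner is $\alpha_1,\alpha_2,\dots$). $g_p^{\bm\alpha}(\theta)=\alpha_0+2\sum_{k=1}^p\alpha_k\cos(k\theta)$. *)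

From HB Require Import structures.
From mathcomp Require Import all_boot all_order all_algebra.
From mathcomp Require Import all_classical all_reals all_analysis.
Set Implicit Arguments. Unset Strict Implicit. Unset Printing Implicit Defensive.
Import Order.TTheory GRing.Theory Num.Theory.
Local Open Scope ring_scope.

(* alpha_k for k : nat, with the convention alpha_k = 0 for k > p. *)
Definition alphaE (R : realType) (p : nat) (alpha : 'I_p.+1 -> R) (k : nat) : R :=
  match @insub nat (fun k => (k < p.+1)%N) _ k with
  | Some i => alpha i
  | None => 0
  end.

(* Matrices use 0-based indices i0 j0 : 'I_n; the paper's 1-based index is i0.+1. *)

(* T_n^alpha : (i,j) |-> alpha_{|i-j|} *)
Definition Toep (R : realType) (p n : nat) (alpha : 'I_p.+1 -> R) : 'M[R]_n :=
  \matrix_(i < n, j < n) alphaE alpha (i - j + (j - i))%N.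

Definition Hank (R : realType) (p n : nat) (alpha : 'I_p.+1 -> R) : 'M[R]_n :=
  \matrix_(i < n, j < n)
    (- alphaE alpha (i.+1 + j.+1)%N + alphaE alpha ((2 * n).+1 - i.+1 - j.+1)%N).

Definition gsym (R : realType) (p : nat) (alpha : 'I_p.+1 -> R) (theta : R) : R :=
  alphaE alpha 0 + 2 * \sum_(1 <= k < p.+1) alphaE alpha k * cos (k%:R * theta).

Definition uvec (R : realType) (n : nat) (j0 : 'I_n) : 'cV[R]_n :=
  \col_(i < n) (Num.sqrt (4 / (2 * n).+1%:R) *
     sin ((i.+1)%:R * ((2 * j0.+1).-1)%:R * pi / (2 * n).+1%:R)).

Definition lam (R : realType) (p n : nat) (alpha : 'I_p.+1 -> R) (j0 : 'I_n) : R :=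
  gsym alpha (((2 * j0.+1).-1)%:R * pi / (2 * n).+1%:R).

Definition is_eigenvalue (R : realType) (n : nat) (A : 'M[R]_n) (a : R) : Prop :=
  exists2 v : 'cV[R]_n, v != 0 & A *m v = a *: v.

From HB Require Import structures.
From mathcomp Require Import all_boot all_order all_algebra.
From mathcomp Require Import all_classical all_reals all_analysis.
From mathcomp Require Import zify ring lra.
Import Order.TTheory GRing.Theory Num.Theory.
Local Open Scope ring_scope.

(* Put w_q = sin (q theta) with theta = (2j-1) pi / (2n+1).  On the infinite
   sequence w the Toeplitz symbol acts by multiplication:
   alpha_0 w_i + sum_k alpha_k (w_(i+k) + w_(i-k)) = g(theta) w_i.  Restricting to
   indices 1..n loses the terms with i - k < 1 and i + k > n.  Since (2n+1) theta
   is an odd multiple of pi, w is odd and symmetric about (2n+1)/2, so the lost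
   terms are w_(i-k) = - w_(k-i) and w_(i+k) = w_(2n+1-i-k): exactly what the
   Hankel matrix H supplies.  The u_j are moreover orthonormal, so they form an
   invertible matrix diagonalizing T + H, and there are no other eigenvalues. *)

Section Fibers.
Context {R : pzRingType}.
Variables (F : nat -> R) (m : nat).

Lemma sum_comp_fibers (N : nat) (a : nat -> R) (f : nat -> nat) :
  (forall l, (l < m)%N -> (f l < N)%N) ->
  \sum_(l < m) a (f l) * F l = \sum_(k < N) a k * \sum_(l < m | f l == k) F l.
Proof.
move=> f_lt; under [RHS]eq_bigr => k _ do rewrite mulr_sumr big_mkcond.
rewrite exchange_big; apply: eq_bigr => l _ /=.
rewrite -big_mkcond /= (eq_bigl (fun k : 'I_N => k == f l :> nat)); last first.
  by move=> k; rewrite eq_sym.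
by rewrite (big_ord1_eq _ (fun k => a k * F l)) f_lt.
Qed.

Lemma sum_distn_fiber i k : (i < m)%N -> (0 < k)%N ->
  \sum_(l < m | (i - l + (l - i) == k)%N) F l =
  (if (i + k < m)%N then F (i + k)%N else 0) + (if (k <= i)%N then F (i - k)%N else 0).
Proof.
move=> i_lt k_gt0; rewrite (bigID [pred l : 'I_m | (i < l)%N]) /=; congr (_ + _).
  by rewrite -(big_ord1_eq +%R F); apply: eq_bigl => l; lia.
have -> : (k <= i)%N = (i - k < m)%N && (k <= i)%N by lia.
by rewrite -(big_ord1_cond_eq +%R F (fun=> k <= i)%N); apply: eq_bigl => l; lia.
Qed.

Lemma sum_addSS_fiber i k : (k <= m)%N ->
  \sum_(l < m | (i.+1 + l.+1 == k)%N) F l = if (i.+2 <= k)%N then F (k - i.+2)%N else 0.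
Proof.
move=> k_le; have -> : (i.+2 <= k)%N = (k - i.+2 < m)%N && (i.+2 <= k)%N by lia.
by rewrite -(big_ord1_cond_eq +%R F (fun=> i.+2 <= k)%N); apply: eq_bigl => l; lia.
Qed.

Lemma sum_reflect_fiber i k : (i < m)%N -> (k < m)%N ->
  \sum_(l < m | ((2 * m).+1 - i.+1 - l.+1 == k)%N) F l =
  if (m <= i + k)%N then F ((2 * m).-1 - (i + k))%N else 0.
Proof.
move=> i_lt k_lt; have -> : (m <= i + k)%N = ((2 * m).-1 - (i + k) < m)%N && (m <= i + k)%N.
  by lia.
rewrite -(big_ord1_cond_eq +%R F (fun=> m <= i + k)%N); apply: eq_bigl => l.
by move: (ltn_ord l); lia.
Qed.
End Fibers.

Section ToeplitzPlusHankel.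
Context {R : realFieldType}.
Variables (m : nat) (w : int -> R).
Hypothesis w_odd : forall q, w (- q) = - w q.
Hypothesis w_reflect : forall q, w ((2 * m).+1%:Z - q) = w q.

Let w0 : w 0 = 0.
Proof. by have := w_odd 0; rewrite oppr0; lra. Qed.

(* Coefficient of [alpha_k] in row [i] of [(T + H) w], the vector with entries [w (l + 1)], [l < m]. *)
Definition tph_coef (i k : nat) : R :=
  \sum_(l < m | (i - l + (l - i) == k)%N) w l.+1
  - \sum_(l < m | (i.+1 + l.+1 == k)%N) w l.+1
  + \sum_(l < m | ((2 * m).+1 - i.+1 - l.+1 == k)%N) w l.+1.

Lemma tph_coef0 i : (i < m)%N -> tph_coef i 0 = w i.+1.
Proof.
pose W l := w (Posz l.+1).
move=> i_lt; have m_gt0 : (0 < m)%N by lia.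
rewrite /tph_coef (sum_addSS_fiber W) // (sum_reflect_fiber W) //.
rewrite addn0 [(m <= i)%N]leqNgt i_lt /= subr0 addr0.
have -> : w i.+1 = if (i < m)%N then W i else 0 by rewrite i_lt.
by rewrite -(big_ord1_eq +%R W); apply: eq_bigl => l; lia.
Qed.

Lemma tph_coef_gt0 i k : (i < m)%N -> (0 < k < m)%N ->
  tph_coef i k = w (i.+1%:Z + k%:Z) + w (i.+1%:Z - k%:Z).
Proof.
pose W l := w (Posz l.+1).
move=> i_lt /andP[k_gt0 k_lt]; rewrite /tph_coef (sum_distn_fiber W) //.
rewrite (sum_addSS_fiber W) ?(ltnW k_lt) // (sum_reflect_fiber W) // /W.
have -> : w (i + k).+1 = w (i.+1%:Z + k%:Z) by congr w; lia.
have -> : w ((2 * m).-1 - (i + k)).+1 = w (i.+1%:Z + k%:Z).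
  by rewrite -[RHS]w_reflect; congr w; lia.
have [k_lt_i | i_lt_k | ->] := ltngtP k i.+1.
- have -> : (k <= i)%N by lia.
  have -> : w (i - k).+1 = w (i.+1%:Z - k%:Z) by congr w; lia.
  by case: ltnP => _; ring.
- have -> : (k <= i)%N = false by lia.
  have -> : w (k - i.+2).+1 = - w (i.+1%:Z - k%:Z) by rewrite -w_odd; congr w; lia.
  by case: ltnP => _; ring.
- by rewrite ltnn subrr w0; case: ltnP => _; ring.
Qed.

Lemma tph_mul_row (a : nat -> R) (p i : nat) :
  (p < m)%N -> (forall k, (p < k)%N -> a k = 0) -> (i < m)%N ->
  \sum_(l < m) (a (i - l + (l - i))%N + (- a (i.+1 + l.+1)%N
                                     + a ((2 * m).+1 - i.+1 - l.+1)%N)) * w l.+1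
  = a 0%N * w i.+1 + \sum_(1 <= k < p.+1) a k * (w (i.+1%:Z + k%:Z) + w (i.+1%:Z - k%:Z)).
Proof.
pose W l := w (Posz l.+1).
move=> p_lt a_gt i_lt.
have fibers f : (forall l, (l < m)%N -> (f l < (2 * m).+1)%N) ->
    \sum_(l < m) a (f l) * W l = \sum_(k < (2 * m).+1) a k * \sum_(l < m | f l == k) W l.
  exact: sum_comp_fibers.
have -> : \sum_(l < m) (a (i - l + (l - i))%N + (- a (i.+1 + l.+1)%N
                                     + a ((2 * m).+1 - i.+1 - l.+1)%N)) * w l.+1
    = \sum_(k < (2 * m).+1) a k * tph_coef i k.
  rewrite /tph_coef.
  under eq_bigr do rewrite mulrDl mulrDl mulNr.
  rewrite !big_split /= sumrN.
  rewrite (fibers (fun l => i - l + (l - i))%N); last by move=> l; lia.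
  rewrite (fibers (fun l => i.+1 + l.+1)%N); last by move=> l; lia.
  rewrite (fibers (fun l => (2 * m).+1 - i.+1 - l.+1)%N); last by move=> l; lia.
  by rewrite -sumrN -!big_split; apply: eq_bigr => k _ /=; ring.
rewrite -(big_mkord xpredT (fun k => a k * tph_coef i k)).
rewrite [LHS](big_cat_nat (leq0n p.+1)) /=; last lia.
rewrite big_ltn // tph_coef0 // [X in _ + X]big_nat_cond [X in _ + X]big1 ?addr0; last first.
  by move=> k /andP[/andP[k_gt _] _]; rewrite a_gt ?mul0r.
congr (_ + _); apply: eq_big_nat => k /andP[k_gt0 k_le].
by rewrite tph_coef_gt0 //; apply/andP; split=> //; lia.
Qed.
End ToeplitzPlusHankel.

Section SineSequence.
Variable R : realType.

Lemma sin_natmulpi (k : nat) : sin (k%:R * pi) = 0 :> R.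
Proof.
elim: k => [|k IH]; first by rewrite mul0r sin0.
by rewrite -addn1 natrD mulrDl mul1r sinDpi IH oppr0.
Qed.

Lemma cos_natmulpi (k : nat) : cos (k%:R * pi) = (-1) ^+ k :> R.
Proof.
elim: k => [|k IH]; first by rewrite mul0r cos0 expr0.
by rewrite -addn1 natrD mulrDl mul1r cosDpi IH exprD expr1 mulrN1.
Qed.

Lemma sin_oddmulpiB (c : nat) (x : R) : odd c -> sin (c%:R * pi - x) = sin x.
Proof.
by move=> c_odd; rewrite sinB sin_natmulpi cos_natmulpi -signr_odd c_odd; ring.
Qed.

Lemma sin_mul_sin (a b : R) : sin a * sin b = (cos (a - b) - cos (a + b)) / 2.
Proof. by rewrite cosB cosD; field. Qed.

Lemma sinD_sinB (a b : R) : sin (a + b) + sin (a - b) = 2 * cos b * sin a.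
Proof. by rewrite sinD sinB; ring. Qed.

Lemma sin_intmul_reflect (m c : nat) (q : int) : odd c ->
  let t := c%:R * pi / (2 * m).+1%:R in
  sin (((2 * m).+1%:Z - q)%:~R * t) = sin (q%:~R * t) :> R.
Proof.
move=> c_odd t; rewrite intrB mulrBl -[X in X - _]/((2 * m).+1%:R * t).
by rewrite /t mulrC divfK ?pnatr_eq0 // sin_oddmulpiB.
Qed.
End SineSequence.

Lemma alphaE_gt (R : realType) (p : nat) (alpha : 'I_p.+1 -> R) k :
  (p < k)%N -> alphaE alpha k = 0.
Proof. by move=> p_lt; rewrite /alphaE insubF //; apply/negbTE; lia. Qed.

Lemma Toep_Hank_uvec {R : realType} {n p : nat} (alpha : 'I_p.+1 -> R) (j : 'I_n) :
  (p < n)%N -> (Toep n alpha + Hank n alpha) *m uvec R j = lam alpha j *: uvec R j.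
Proof.
move=> p_lt; set c := ((2 * j.+1).-1)%N; set t : R := c%:R * pi / (2 * n).+1%:R.
pose s : R := Num.sqrt (4 / (2 * n).+1%:R); pose w (q : int) : R := sin (q%:~R * t).
have c_odd : odd c by rewrite /c (_ : ((2 * j.+1).-1 = (2 * j).+1)%N) /= ?odd_double //; lia.
have w_odd q : w (- q) = - w q by rewrite /w mulrNz mulNr sinN.
have w_refl q : w ((2 * n).+1%:Z - q) = w q by exact: sin_intmul_reflect.
have uvecE l : uvec R j l 0 = s * w l.+1 by rewrite mxE /w /t !mulrA.
apply/matrixP => i z; rewrite (ord1 z) mxE [RHS]mxE uvecE.
under eq_bigr => l _ do rewrite uvecE !mxE mulrCA.
rewrite -mulr_sumr (@tph_mul_row R n w w_odd w_refl (alphaE alpha) p i) //; last first.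
  exact: alphaE_gt.
have wDB k : w (i.+1%:Z + k%:Z) + w (i.+1%:Z - k%:Z) = 2 * cos (k%:R * t) * w i.+1.
  by rewrite /w intrD intrB mulrDl mulrBl sinD_sinB.
under eq_big_nat => k _ do rewrite wDB.
rewrite /lam /gsym -/t.
have -> : \sum_(1 <= k < p.+1) alphaE alpha k * (2 * cos (k%:R * t) * w i.+1)
    = 2 * (\sum_(1 <= k < p.+1) alphaE alpha k * cos (k%:R * t)) * w i.+1.
  by rewrite mulr_sumr mulr_suml; apply: eq_bigr => k _; ring.
ring.
Qed.

Section Orthogonality.
Variable R : realType.

Lemma sin_mul_sum_cos (x : R) (N : nat) :
  2 * sin x * \sum_(i < N) cos (i.+1%:R * (2 * x)) = sin ((2 * N).+1%:R * x) - sin x.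
Proof.
elim: N => [|N IH]; first by rewrite big_ord0 mulr0 muln0 mul1r subrr.
rewrite big_ord_recr /= mulrDr IH.
have -> : (2 * N.+1).+1%:R * x = N.+1%:R * (2 * x) + x.
  by rewrite -addn1 natrD natrM -addn1 natrD; ring.
have -> : (2 * N).+1%:R * x = N.+1%:R * (2 * x) - x.
  by rewrite -addn1 natrD natrM -addn1 natrD; ring.
by rewrite sinB sinD; ring.
Qed.

Lemma sum_cos_eq (x : R) (N : nat) : sin x != 0 -> sin ((2 * N).+1%:R * x) = 0 ->
  \sum_(i < N) cos (i.+1%:R * (2 * x)) = - 2^-1.
Proof.
move=> sx_neq0 sNx_eq0; apply: (mulfI (x := 2 * sin x)); first by rewrite mulf_neq0.
by rewrite sin_mul_sum_cos sNx_eq0; field.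
Qed.

Variable m : nat.
Let h : R := pi / (2 * m).+1%:R.

Lemma sin_pidiv_neq0 (r : nat) : (0 < r < (2 * m).+1)%N -> sin (r%:R * h) != 0.
Proof.
case/andP=> r_gt0 r_lt; apply/lt0r_neq0/sin_gt0_pi/andP; split.
  by rewrite mulr_gt0 ?ltr0n ?divr_gt0 ?pi_gt0 ?ltr0n.
by rewrite /h mulrA ltr_pdivrMr ?ltr0n // [pi * _]mulrC ltr_pM2r ?ltr_nat ?pi_gt0.
Qed.

Lemma sum_cos_pidiv (r : nat) : (0 < r < (2 * m).+1)%N ->
  \sum_(i < m) cos (i.+1%:R * (2 * (r%:R * h))) = - 2^-1.
Proof.
move=> r_bounds; apply: sum_cos_eq; first exact: sin_pidiv_neq0.
by rewrite mulrCA /h [_%:R * (pi / _)]mulrC divfK ?pnatr_eq0 // sin_natmulpi.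
Qed.

Lemma uvec_dot (j k : 'I_m) : \sum_(i < m) uvec R j i 0 * uvec R k i 0 = (j == k)%:R.
Proof.
wlog k_le_j : j k / (k <= j)%N.
  move=> hwlog; have [/hwlog //|/ltnW j_le_k] := leqP k j.
  rewrite eq_sym -(hwlog k j j_le_k); apply: eq_bigr => i _; exact: mulrC.
pose s : R := Num.sqrt (4 / (2 * m).+1%:R).
have oddE (q : nat) : ((2 * q.+1).-1)%:R = 2 * q%:R + 1 :> R.
  by rewrite (_ : ((2 * q.+1).-1 = 2 * q + 1)%N) 1?natrD 1?natrM //; lia.
have uvecE (q i : 'I_m) : uvec R q i 0 = s * sin (i.+1%:R * ((2 * q%:R + 1) * h)).
  by rewrite mxE /h -oddE !mulrA.
have entry (i : 'I_m) : uvec R j i 0 * uvec R k i 0 = s ^+ 2 / 2 *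
    (cos (i.+1%:R * (2 * ((j - k)%N%:R * h))) - cos (i.+1%:R * (2 * ((j + k + 1)%N%:R * h)))).
  rewrite !uvecE natrB // natrD natrD mulrACA -expr2 sin_mul_sin.
  have -> : i.+1%:R * ((2 * j%:R + 1) * h) - i.+1%:R * ((2 * k%:R + 1) * h)
            = i.+1%:R * (2 * ((j%:R - k%:R) * h)) by ring.
  have -> : i.+1%:R * ((2 * j%:R + 1) * h) + i.+1%:R * ((2 * k%:R + 1) * h)
            = i.+1%:R * (2 * ((j%:R + k%:R + 1) * h)) by ring.
  ring.
rewrite (eq_bigr _ (fun i _ => entry i)) -mulr_sumr sumrB (sum_cos_pidiv (j + k + 1)); last first.
  by move: (ltn_ord j) (ltn_ord k); lia.
rewrite sqr_sqrtr ?divr_ge0 ?ler0n //.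
have [<- | j_neq_k] := eqVneq j k.
  under eq_bigr do rewrite subnn mul0r mulr0 mulr0 cos0.
  rewrite sumr_const card_ord [(2 * m).+1%:R]mulrSr natrM mulr1n; field.
  by have := ler0n R m; lra.
rewrite sum_cos_pidiv ?subrr ?mulr0 //.
by move: (ltn_ord j) j_neq_k; rewrite -val_eqE /=; lia.
Qed.
End Orthogonality.

Definition dst_mx (R : realType) (n : nat) : 'M[R]_n := \matrix_(i, j) uvec R j i 0.

Lemma dst_mx_orthogonal (R : realType) (n : nat) : (dst_mx R n)^T *m dst_mx R n = 1%:M.
Proof.
apply/matrixP => j k; rewrite [LHS]mxE [RHS]mxE -uvec_dot.
by apply: eq_bigr => i _; rewrite !mxE.
Qed.

Lemma Toep_Hank_dst {R : realType} {n p : nat} (alpha : 'I_p.+1 -> R) : (p < n)%N ->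
  (Toep n alpha + Hank n alpha) *m dst_mx R n
  = dst_mx R n *m diag_mx (\row_j lam alpha j).
Proof.
move=> p_lt; apply/matrixP => i j; rewrite mul_mx_diag !mxE.
have /matrixP/(_ i 0) := Toep_Hank_uvec alpha j p_lt; rewrite !mxE mulrC => <-.
by apply: eq_bigr => l _; rewrite !mxE.
Qed.

Lemma eigenvalue_diagonalized {F : fieldType} {n : nat} {A U : 'M[F]_n}
    {d : 'rV[F]_n} {a : F} {v : 'cV[F]_n} :
  U \in unitmx -> A *m U = U *m diag_mx d -> v != 0 -> A *m v = a *: v ->
  exists j, a = d 0 j.
Proof.
move=> U_unit AU v_neq0 Av.
have [c v_eq] : exists c, v = U *m c.
  by exists (invmx U *m v); rewrite mulmxA mulmxV // mul1mx.
have Dc : diag_mx d *m c = a *: c.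
  have : U *m (diag_mx d *m c) = U *m (a *: c).
    by rewrite -scalemxAr -v_eq mulmxA -AU -mulmxA -v_eq.
  by move/(congr1 (mulmx (invmx U))); rewrite !mulmxA mulVmx // !mul1mx.
have [j cj_neq0] : exists j, c j 0 != 0.
  apply/existsP; apply: contraNT v_neq0 => /existsPn c0.
  rewrite v_eq (_ : c = 0) ?mulmx0 //; apply/matrixP => i z.
  by rewrite (ord1 z) mxE; apply/eqP; rewrite -[_ == _]negbK c0.
exists j; apply/esym/(mulIf cj_neq0).
by have /matrixP/(_ j 0) := Dc; rewrite mul_diag_mx !mxE.
Qed.

Theorem mainTheorem9 (R : realType) (n p : nat) (alpha : 'I_p.+1 -> R) :
  (1 <= p)%N -> (p.+1 <= n)%N ->
  (forall j : 'I_n,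
     (Toep n alpha + Hank n alpha) *m uvec R j = lam alpha j *: uvec R j)
  /\ (forall a : R, is_eigenvalue (Toep n alpha + Hank n alpha) a ->
        exists j : 'I_n, a = lam alpha j).
Proof.
move=> _ p_lt; split=> [j | a [v v_neq0 Av]]; first exact: Toep_Hank_uvec.
have [_ U_unit] := mulmx1_unit (dst_mx_orthogonal R n).
have [j ->] := eigenvalue_diagonalized U_unit (Toep_Hank_dst alpha p_lt) v_neq0 Av.
by exists j; rewrite mxE.
Qed.
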